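(* Let $n \in \mathbb{Z}_{\geq 0}$, $k \in \mathbb{Z}_{\geq 1}$, $m_1,\dots,m_k\in\mathbb{Z}_{\geq 2}$, and let \[ G = \langle e_1, \ldots, e_k, h_1, \ldots, h_{2n} \mid e_1^{m_1} = \cdots = e_k^{m_k} = 1 \rangle , \] and assume that $G$ is neither cyclic nor isomorphic to $\mathbb{Z}_2\ast\mathbb{Z}_2$. Let $F$ be the subgroup of $G$ generated by $S_1\cup S_2$ (defined below). Then $F$ is a free group and $[G:F]=m_1\cdots m_k$.
   Context: Notation: $[l]=\{1,\dots,l\}$ for $l\in\mathbb{Z}_{>0}$; $[g,h]=ghg^{-1}h^{-1}$ and ${}^{g}h = ghg^{-1}$. For $2\le t\le k$ set $\Lambda_t = \big(([m_1]\times\cdots\times[m_{t-1}])\setminus\{(m_1,\dots,m_{t-1})\}\big)\times[m_t-1]$ and $\Xi_t=[m_{t+1}]\times\cdots\times[m_k]$, where $\Xi_k=\{0\}$. For $\lambda=(u_1,\dots,u_t)\in\Lambda_t$ and $\xi=(u_{t+1},\dots,u_k)\in\Xi_t$ put $f_\lambda=[e_t^{u_t}, e_{t-1}^{u_{t-1}}\cdots e_1^{u_1}]$ and $g_\xi = e_k^{u_k}\cdots e_{t+1}^{u_{t+1}}$ (with $g_\xi=1$ for $\xi\in\Xi_k$). Set $S_1=\{{}^{g_\xi}f_\lambda \mid 2\le t\le k,\ \lambda\in\Lambda_t,\ \xi\in\Xi_t\}$ and $S_2=\{{}^{e_k^{i_k}\cdots e_1^{i_1}}h_l \mid l\in[2n],\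 (i_1,\dots,i_k)\in[m_1]\times\cdots\times[m_k]\}$. *)

From Stdlib Require Import Arith.

Record Grp := {
  carrier :> Type;
  gmul : carrier -> carrier -> carrier;
  gone : carrier;
  ginv : carrier -> carrier;
  gmulA : forall x y z, gmul x (gmul y z) = gmul (gmul x y) z;
  gmul1g : forall x, gmul gone x = x;
  gmulVg : forall x, gmul (ginv x) x = gone
}.

Arguments gmul {g}.
Arguments gone {g}.
Arguments ginv {g}.

Fixpoint gpow {G : Grp} (x : G) (n : nat) : G :=
  match n with O => gone | S n' => gmul x (gpow x n') end.

Definition gcomm {G : Grp} (g h : G) : G :=
  gmul g (gmul h (gmul (ginv g) (ginv h))).

Definition gconj {G : Grp} (g h : G) : G := gmul g (gmul h (ginv g)).

Definition is_hom {G H : Grp} (f : G -> H) : Prop :=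
  forall x y, f (gmul x y) = gmul (f x) (f y).

Inductive gen {G : Grp} (S : G -> Prop) : G -> Prop :=
| gen_in : forall x, S x -> gen S x
| gen_one : gen S gone
| gen_mul : forall x y, gen S x -> gen S y -> gen S (gmul x y)
| gen_inv : forall x, gen S x -> gen S (ginv x).

(* G, with distinguished elements e_1..e_k and h_1..h_{2n}, is the group
   < e_1..e_k, h_1..h_{2n} | e_j^{m_j} = 1 > (universal property of the
   presentation). *)
Definition is_presented (G : Grp) (k n : nat) (m : nat -> nat)
  (e h : nat -> G) : Prop :=
  (forall j, 1 <= j <= k -> gpow (e j) (m j) = gone) /\
  (forall (H : Grp) (a b : nat -> H),
     (forall j, 1 <= j <= k -> gpow (a j) (m j) = gone) ->
     exists f : G -> H, is_hom f /\
       (forall j, 1 <= j <= k -> f (e j) = a j) /\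
       (forall l, 1 <= l <= 2 * n -> f (h l) = b l)) /\
  (forall (H : Grp) (f1 f2 : G -> H), is_hom f1 -> is_hom f2 ->
     (forall j, 1 <= j <= k -> f1 (e j) = f2 (e j)) ->
     (forall l, 1 <= l <= 2 * n -> f1 (h l) = f2 (h l)) ->
     forall x, f1 x = f2 x).

Definition is_cyclic (G : Grp) : Prop :=
  exists g : G, forall x : G, gen (fun y => y = g) x.

(* G is isomorphic to Z_2 * Z_2 = < a, b | a^2 = b^2 = 1 >. *)
Definition iso_Z2_free_Z2 (G : Grp) : Prop :=
  exists a b : nat -> G, is_presented G 2 0 (fun _ => 2) a b.

(* B freely generates the subgroup <B> of G (universal property). *)
Definition free_basis {G : Grp} (B : G -> Prop) : Prop :=
  forall (H : Grp) (phi : G -> H),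
    (exists psi : G -> H,
       (forall x y, gen B x -> gen B y -> psi (gmul x y) = gmul (psi x) (psi y)) /\
       (forall x, B x -> psi x = phi x)) /\
    (forall psi1 psi2 : G -> H,
       (forall x y, gen B x -> gen B y -> psi1 (gmul x y) = gmul (psi1 x) (psi1 y)) ->
       (forall x y, gen B x -> gen B y -> psi2 (gmul x y) = gmul (psi2 x) (psi2 y)) ->
       (forall x, B x -> psi1 x = psi2 x) ->
       forall x, gen B x -> psi1 x = psi2 x).

Definition is_free_subgroup {G : Grp} (F : G -> Prop) : Prop :=
  exists B : G -> Prop, (forall x, F x <-> gen B x) /\ free_basis B.

(* [G : F] = N : there are exactly N left cosets x F. *)
Definition has_index {G : Grp} (F : G -> Prop) (N : nat) : Prop :=
  exists r : nat -> G,
    (forall x : G, exists i, i < N /\ F (gmul (ginv (r i)) x)) /\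
    (forall i j, i < N -> j < N -> F (gmul (ginv (r i)) (r j)) -> i = j).

(* e_j^{u_j} e_{j-1}^{u_{j-1}} ... e_{lo+1}^{u_{lo+1}}  (empty product = 1) *)
Fixpoint prod_down {G : Grp} (e : nat -> G) (u : nat -> nat) (lo j : nat) : G :=
  match j with
  | O => gone
  | S j' => if S j' <=? lo then gone
            else gmul (gpow (e (S j')) (u (S j'))) (prod_down e u lo j')
  end.

Definition f_lam {G : Grp} (e : nat -> G) (t : nat) (u : nat -> nat) : G :=
  gcomm (gpow (e t) (u t)) (prod_down e u 0 (t - 1)).

Definition g_xi {G : Grp} (e : nat -> G) (k t : nat) (u : nat -> nat) : G :=
  prod_down e u t k.

(* S_1: u encodes lambda = (u_1..u_t) in Lambda_t and xi = (u_{t+1}..u_k) in Xi_t *)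
Definition S1 {G : Grp} (k : nat) (m : nat -> nat) (e : nat -> G) (x : G) : Prop :=
  exists t (u : nat -> nat),
    2 <= t <= k /\
    (forall i, 1 <= i <= t - 1 -> 1 <= u i <= m i) /\
    (exists i, 1 <= i <= t - 1 /\ u i <> m i) /\
    1 <= u t <= m t - 1 /\
    (forall i, t + 1 <= i <= k -> 1 <= u i <= m i) /\
    x = gconj (g_xi e k t u) (f_lam e t u).

Definition S2 {G : Grp} (k n : nat) (m : nat -> nat) (e h : nat -> G) (x : G) : Prop :=
  exists l (i : nat -> nat),
    1 <= l <= 2 * n /\
    (forall j, 1 <= j <= k -> 1 <= i j <= m j) /\
    x = gconj (prod_down e i 0 k) (h l).

Fixpoint prod_m (m : nat -> nat) (k : nat) : nat :=
  match k with O => 1 | S k' => m (S k') * prod_m m k' end.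

From Stdlib Require Import Arith Lia Bool FunctionalExtensionality ProofIrrelevance
  ClassicalEpsilon.

(* Let A = Z/m_1 x ... x Z/m_k and phi : G -> A the homomorphism killing the h_l
   and sending e_j to the j-th unit vector. The elements
   rep a = (e_k^(u_k) ... e_1^(u_1))^-1, u_i = m_i - a_i, satisfy phi (rep a) = a,
   and the Schreier elements rep (phi(x) a)^-1 x rep a are, for x = h_l, exactly
   the elements of S_2, and for x = e_t quotients X(t, a + delta_t) X(t, a)^-1,
   where X(t, b) = ^(g_xi) f_lambda, with the exponents u_i of rep b, is either
   trivial or in S_1. By induction on x every
   rep (phi x)^-1 x lies in F, and F lies in ker phi, so [G : F] = |A|.

   Freeness: for any map f into a group H, the universal property of G gives a
   homomorphism Phi into the wreath product A x| H^A lifting phi, whose H^A-part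
   on e_t is the coboundary of b |-> f (X(t, b)) (or 1 when X(t, b) is trivial)
   and on h_l is b |-> f (rep b^-1 h_l rep b). Evaluating the H^A-part at 0 is
   multiplicative on ker phi and extends f on S_1 and S_2. *)

Lemma gmulgV (G : Grp) (x : G) : gmul x (ginv x) = gone.
Proof.
  rewrite <- (gmul1g G (gmul x (ginv x))), <- (gmulVg G (ginv x)) at 1.
  rewrite <- gmulA, (gmulA G (ginv x) x (ginv x)), gmulVg, gmul1g.
  apply gmulVg.
Qed.

Lemma gmulg1 (G : Grp) (x : G) : gmul x gone = x.
Proof. now rewrite <- (gmulVg G x), gmulA, gmulgV, gmul1g. Qed.

Lemma gmulKg (G : Grp) (x y : G) : gmul (ginv x) (gmul x y) = y.
Proof. now rewrite gmulA, gmulVg, gmul1g. Qed.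

Lemma gmulKVg (G : Grp) (x y : G) : gmul x (gmul (ginv x) y) = y.
Proof. now rewrite gmulA, gmulgV, gmul1g. Qed.

Lemma gmulI (G : Grp) (x y z : G) : gmul x y = gmul x z -> y = z.
Proof. intro E. now rewrite <- (gmulKg G x y), E, gmulKg. Qed.

Lemma gmulIr (G : Grp) (x y z : G) : gmul y x = gmul z x -> y = z.
Proof.
  intro E.
  now rewrite <- (gmulg1 G y), <- (gmulgV G x), gmulA, E, <- gmulA, gmulgV, gmulg1.
Qed.

Lemma gmul_eq1_inv (G : Grp) (x y : G) : gmul x y = gone -> y = ginv x.
Proof. intro E. apply (gmulI G x). now rewrite E, gmulgV. Qed.

Lemma ginvK (G : Grp) (x : G) : ginv (ginv x) = x.
Proof. symmetry. apply gmul_eq1_inv, gmulVg. Qed.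

Lemma ginvM (G : Grp) (x y : G) : ginv (gmul x y) = gmul (ginv y) (ginv x).
Proof.
  symmetry. apply gmul_eq1_inv.
  now rewrite <- gmulA, (gmulA G y), gmulgV, gmul1g, gmulgV.
Qed.

Lemma ginv1 (G : Grp) : ginv (@gone G) = gone.
Proof. symmetry. apply gmul_eq1_inv, gmul1g. Qed.

Ltac gsimpl :=
  repeat progress (rewrite ?ginvM, ?ginvK, ?ginv1, ?gmul1g, ?gmulg1;
                   rewrite <- ?gmulA; rewrite ?gmulKg, ?gmulKVg, ?gmulgV, ?gmulVg).

Lemma gpowSr (G : Grp) (x : G) n : gpow x (S n) = gmul (gpow x n) x.
Proof.
  induction n as [|n IH]; cbn [gpow] in *.
  - now rewrite gmulg1, gmul1g.
  - now rewrite IH at 1; rewrite gmulA.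
Qed.

Section Homomorphisms.
Variables (G H : Grp) (f : G -> H).
Hypothesis f_hom : is_hom f.

Lemma hom1 : f gone = gone.
Proof. apply (gmulI H (f gone)). now rewrite <- f_hom, gmul1g, gmulg1. Qed.

Lemma homV x : f (ginv x) = ginv (f x).
Proof. apply gmul_eq1_inv. now rewrite <- f_hom, gmulgV, hom1. Qed.

Lemma homX x n : f (gpow x n) = gpow (f x) n.
Proof. induction n; cbn [gpow]; [apply hom1|]. now rewrite f_hom, IHn. Qed.

Lemma hom_gconj x y : f (gconj x y) = gconj (f x) (f y).
Proof. unfold gconj. now rewrite !f_hom, homV. Qed.

Lemma hom_gcomm x y : f (gcomm x y) = gcomm (f x) (f y).
Proof. unfold gcomm. now rewrite !f_hom, !homV. Qed.

End Homomorphisms.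

Lemma gcomm1g (G : Grp) (y : G) : gcomm gone y = gone.
Proof. unfold gcomm. now gsimpl. Qed.

Lemma gcommg1 (G : Grp) (x : G) : gcomm x gone = gone.
Proof. unfold gcomm. now gsimpl. Qed.

Lemma gconjg1 (G : Grp) (x : G) : gconj x gone = gone.
Proof. unfold gconj. now gsimpl. Qed.

Lemma gcomm_abelian (G : Grp) (x y : G) :
  (forall a b : G, gmul a b = gmul b a) -> gcomm x y = gone.
Proof. intro C. unfold gcomm. rewrite (C (ginv x) (ginv y)). now gsimpl. Qed.

Section Subgroup.
Variables (G : Grp) (K : G -> Prop).
Hypotheses (K1 : K gone) (KM : forall x y, K x -> K y -> K (gmul x y))
  (KV : forall x, K x -> K (ginv x)).

Lemma subgrp_eq (a b : {x : G | K x}) : proj1_sig a = proj1_sig b -> a = b.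
Proof.
  destruct a as [a pa], b as [b pb]; simpl; intros <-.
  f_equal. apply proof_irrelevance.
Qed.

Definition SubGrp : Grp.
Proof.
  refine {| carrier := {x : G | K x};
            gmul a b := exist _ (gmul (proj1_sig a) (proj1_sig b))
                                (KM _ _ (proj2_sig a) (proj2_sig b));
            gone := exist _ gone K1;
            ginv a := exist _ (ginv (proj1_sig a)) (KV _ (proj2_sig a)) |};
  intros; apply subgrp_eq; simpl.
  - apply gmulA.
  - apply gmul1g.
  - apply gmulVg.
Defined.

Lemma SubGrp_pow (a : SubGrp) n : proj1_sig (gpow a n) = gpow (proj1_sig a) n.
Proof. induction n; simpl; [reflexivity|]. now rewrite IHn. Qed.

End Subgroup.

(* A subgroup containing the generators of a presented group is everything:
   map G into that subgroup by the universal property and compare with the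
   identity by uniqueness. *)
Lemma presented_ind (G : Grp) k n m e h : is_presented G k n m e h ->
  forall K : G -> Prop, K gone -> (forall x y, K x -> K y -> K (gmul x y)) ->
  (forall x, K x -> K (ginv x)) -> (forall j, 1 <= j <= k -> K (e j)) ->
  (forall l, 1 <= l <= 2 * n -> K (h l)) -> forall x, K x.
Proof.
  intros [Hrel [Hex Huniq]] K K1 KM KV Ke Kh.
  set (S := SubGrp G K K1 KM KV).
  set (lift y := match excluded_middle_informative (K y) with
                 | left p => (exist _ y p : S) | right _ => (gone : S) end).
  assert (lift_val : forall y, K y -> proj1_sig (lift y) = y).
  { intros y Ky. unfold lift. now destruct excluded_middle_informative. }
  destruct (Hex S (fun j => lift (e j)) (fun l => lift (h l))) as [f [Hf [Hfe Hfh]]].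
  { intros j Hj. apply subgrp_eq. rewrite (SubGrp_pow G K K1 KM KV). simpl.
    now rewrite lift_val, Hrel; auto. }
  intro x. rewrite <- (Huniq G (fun x => proj1_sig (f x)) (fun x => x)).
  - apply (proj2_sig (f x)).
  - intros u v. simpl. now rewrite Hf.
  - now intros u v.
  - intros j Hj. now rewrite Hfe, lift_val; auto.
  - intros l Hl. now rewrite Hfh, lift_val; auto.
Qed.

Definition hom_on {G H : Grp} (B : G -> Prop) (psi : G -> H) : Prop :=
  forall x y, gen B x -> gen B y -> psi (gmul x y) = gmul (psi x) (psi y).

Lemma hom_on1 (G H : Grp) (B : G -> Prop) (psi : G -> H) :
  hom_on B psi -> psi gone = gone.
Proof.
  intro Hpsi. apply (gmulI H (psi gone)).
  rewrite <- Hpsi by constructor. now rewrite gmul1g, gmulg1.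
Qed.

Lemma hom_onV (G H : Grp) (B : G -> Prop) (psi : G -> H) :
  hom_on B psi -> forall x, gen B x -> psi (ginv x) = ginv (psi x).
Proof.
  intros Hpsi x Hx. apply gmul_eq1_inv.
  rewrite <- Hpsi by (assumption || now apply gen_inv).
  rewrite gmulgV. exact (hom_on1 _ _ _ _ Hpsi).
Qed.

Lemma hom_on_gen_eq (G H : Grp) (B : G -> Prop) (psi1 psi2 : G -> H) :
  hom_on B psi1 -> hom_on B psi2 -> (forall x, B x -> psi1 x = psi2 x) ->
  forall x, gen B x -> psi1 x = psi2 x.
Proof.
  intros H1 H2 HB x Hx.
  induction Hx as [x Bx| |x y Hx IHx Hy IHy|x Hx IHx].
  - auto.
  - now rewrite (hom_on1 _ _ _ _ H1), (hom_on1 _ _ _ _ H2).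
  - now rewrite H1, H2, IHx, IHy.
  - now rewrite (hom_onV _ _ _ _ H1), (hom_onV _ _ _ _ H2), IHx.
Qed.

Section ProdDown.
Variables (G : Grp) (e : nat -> G).

Lemma prod_down_le u lo j : j <= lo -> prod_down e u lo j = gone.
Proof.
  destruct j; cbn [prod_down]; [reflexivity|]. intro Hj.
  now replace (S j <=? lo) with true by (symmetry; apply Nat.leb_le; lia).
Qed.

Lemma prod_down_S u lo j : lo <= j ->
  prod_down e u lo (S j) = gmul (gpow (e (S j)) (u (S j))) (prod_down e u lo j).
Proof.
  intro Hj. cbn [prod_down].
  now replace (S j <=? lo) with false by (symmetry; apply Nat.leb_gt; lia).
Qed.

Lemma eq_prod_down u v lo j : (forall i, lo < i <= j -> u i = v i) ->
  prod_down e u lo j = prod_down e v lo j.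
Proof.
  induction j as [|j IH]; intro Huv; [reflexivity|].
  destruct (Nat.le_gt_cases (S j) lo).
  - now rewrite !prod_down_le by lia.
  - rewrite !prod_down_S, Huv, IH by (auto with arith || (intros; apply Huv); lia).
    reflexivity.
Qed.

Lemma prod_down_split u lo t j : lo <= t <= j ->
  prod_down e u lo j = gmul (prod_down e u t j) (prod_down e u lo t).
Proof.
  induction j as [|j IH]; intro Ht.
  - replace t with 0 by lia. now rewrite (prod_down_le u 0 0), gmul1g.
  - destruct (Nat.eq_dec t (S j)) as [->|Nt].
    + now rewrite (prod_down_le u (S j) (S j)), gmul1g.
    + rewrite !prod_down_S, IH by lia. apply gmulA.
Qed.

Lemma prod_down_eq1 u lo j : (forall i, lo < i <= j -> gpow (e i) (u i) = gone) ->
  prod_down e u lo j = gone.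
Proof.
  induction j as [|j IH]; intro Hu; [reflexivity|].
  destruct (Nat.le_gt_cases (S j) lo).
  - now apply prod_down_le.
  - rewrite prod_down_S, Hu, IH, gmul1g by (lia || (intros; apply Hu; lia)).
    reflexivity.
Qed.

End ProdDown.

Lemma eq_prod_down_gen (G : Grp) (e e' : nat -> G) u lo j :
  (forall i, lo < i <= j -> e i = e' i) -> prod_down e u lo j = prod_down e' u lo j.
Proof.
  induction j as [|j IH]; intro Hee; [reflexivity|].
  destruct (Nat.le_gt_cases (S j) lo).
  - now rewrite !prod_down_le by lia.
  - rewrite !prod_down_S, Hee, IH by (lia || (intros; apply Hee; lia)). reflexivity.
Qed.

Lemma hom_prod_down (G H : Grp) (f : G -> H) (e : nat -> G) u lo j : is_hom f ->
  f (prod_down e u lo j) = prod_down (fun i => f (e i)) u lo j.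
Proof.
  intro Hf. induction j as [|j IH]; [apply (hom1 _ _ f Hf)|].
  destruct (Nat.le_gt_cases (S j) lo).
  - rewrite !prod_down_le by lia. apply (hom1 _ _ f Hf).
  - rewrite !prod_down_S by lia. now rewrite Hf, (homX _ _ f Hf), IH.
Qed.

Section ZVectors.
Variable k : nat.

Definition in_range (i : nat) : bool := (1 <=? i) && (i <=? k).

Lemma in_range_true i : in_range i = true <-> 1 <= i <= k.
Proof. unfold in_range. rewrite andb_true_iff, !Nat.leb_le. tauto. Qed.

Lemma in_range_false i : in_range i = false <-> ~ 1 <= i <= k.
Proof. rewrite <- in_range_true. destruct (in_range i); intuition congruence. Qed.

Variable m : nat -> nat.

(* Coordinates outside [1, k] are forced to 0, so that vectors are equal as
   functions exactly when they agree on [1, k]. *)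
Definition zred (i x : nat) : nat := if in_range i then x mod m i else 0.

Definition normalized (a : nat -> nat) : Prop := forall i, zred i (a i) = a i.

Lemma zred_in i x : 1 <= i <= k -> zred i x = x mod m i.
Proof. intro Hi. unfold zred. now rewrite (proj2 (in_range_true i) Hi). Qed.

Lemma zred_out i x : ~ 1 <= i <= k -> zred i x = 0.
Proof. intro Hi. unfold zred. now rewrite (proj2 (in_range_false i) Hi). Qed.

Lemma zred0 i : zred i 0 = 0.
Proof. unfold zred. destruct (in_range i); [apply Nat.Div0.mod_0_l | reflexivity]. Qed.

Lemma zred_id i x : zred i (zred i x) = zred i x.
Proof. unfold zred. destruct (in_range i); [apply Nat.Div0.mod_mod | reflexivity]. Qed.

Lemma zredDl i x y : zred i (zred i x + y) = zred i (x + y).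
Proof. unfold zred. destruct (in_range i); [apply Nat.Div0.add_mod_idemp_l | reflexivity]. Qed.

Lemma zredDr i x y : zred i (x + zred i y) = zred i (x + y).
Proof. unfold zred. destruct (in_range i); [apply Nat.Div0.add_mod_idemp_r | reflexivity]. Qed.

Definition zvec : Type := {a : nat -> nat | normalized a}.

Definition zcoord (a : zvec) : nat -> nat := proj1_sig a.

Definition zmk (f : nat -> nat) : zvec :=
  exist normalized (fun i => zred i (f i)) (fun i => zred_id i (f i)).

Lemma zcoord_mk f i : zcoord (zmk f) i = zred i (f i).
Proof. reflexivity. Qed.

Lemma zvec_ext (a b : zvec) : (forall i, zcoord a i = zcoord b i) -> a = b.
Proof.
  destruct a as [a pa], b as [b pb]; unfold zcoord; simpl; intro E.
  apply functional_extensionality in E. subst b. f_equal. apply proof_irrelevance.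
Qed.

Lemma zcoord_red (a : zvec) i : zred i (zcoord a i) = zcoord a i.
Proof. apply (proj2_sig a). Qed.

Lemma zcoord_out (a : zvec) i : ~ 1 <= i <= k -> zcoord a i = 0.
Proof. intro Hi. now rewrite <- zcoord_red, zred_out. Qed.

Lemma zcoord_lt (a : zvec) i : 1 <= i <= k -> 0 < m i -> zcoord a i < m i.
Proof.
  intros Hi Hm. rewrite <- zcoord_red, zred_in by exact Hi.
  apply Nat.mod_upper_bound. lia.
Qed.

End ZVectors.

Arguments zcoord {k m}.

Section ZProd.
Variables (k : nat) (m : nat -> nat).
Hypothesis m_pos : forall i, 1 <= i <= k -> 0 < m i.

Definition Zprod : Grp.
Proof.
  refine {| carrier := zvec k m;
            gmul a b := zmk k m (fun i => zcoord a i + zcoord b i);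
            gone := zmk k m (fun _ => 0);
            ginv a := zmk k m (fun i => m i - zcoord a i) |};
  intros; apply zvec_ext; intro i; rewrite !zcoord_mk.
  - now rewrite zredDl, zredDr, Nat.add_assoc.
  - now rewrite zred0, Nat.add_0_l, zcoord_red.
  - rewrite zredDl, zred0. destruct (in_range k i) eqn:Ei.
    + apply in_range_true in Ei. rewrite zred_in by exact Ei.
      assert (zcoord x i < m i) by (apply (zcoord_lt k m); auto).
      rewrite Nat.sub_add by lia. apply Nat.Div0.mod_same.
    + apply in_range_false in Ei. now rewrite zred_out.
Defined.

Lemma Zprod_mul (a b : Zprod) i : zcoord (gmul a b) i = zred k m i (zcoord a i + zcoord b i).
Proof. reflexivity. Qed.

Lemma Zprod_one i : zcoord (@gone Zprod) i = 0.
Proof. apply zred0. Qed.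

Lemma Zprod_inv (a : Zprod) i : zcoord (ginv a) i = zred k m i (m i - zcoord a i).
Proof. reflexivity. Qed.

Lemma Zprod_comm (a b : Zprod) : gmul a b = gmul b a.
Proof. apply zvec_ext; intro i. now rewrite !Zprod_mul, Nat.add_comm. Qed.

Definition zdelta (t : nat) : Zprod := zmk k m (fun i => if i =? t then 1 else 0).

Lemma zcoord_delta_pow t s i :
  zcoord (gpow (zdelta t) s) i = zred k m i (if i =? t then s else 0).
Proof.
  induction s as [|s IH]; cbn [gpow].
  - rewrite Zprod_one. destruct (i =? t); now rewrite zred0.
  - rewrite Zprod_mul, IH. unfold zdelta. rewrite zcoord_mk, zredDl, zredDr.
    now destruct (i =? t).
Qed.

Lemma zdelta_order j : 1 <= j <= k -> gpow (zdelta j) (m j) = gone.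
Proof.
  intro Hj. apply zvec_ext; intro i. rewrite zcoord_delta_pow, Zprod_one.
  destruct (i =? j) eqn:E; [|apply zred0].
  apply Nat.eqb_eq in E as ->. now rewrite zred_in, Nat.Div0.mod_same.
Qed.

Lemma zcoord_delta_powM_other t s (b : Zprod) i : i <> t ->
  zcoord (gmul (gpow (zdelta t) s) b) i = zcoord b i.
Proof.
  intro Hi. rewrite Zprod_mul, zcoord_delta_pow, zredDl.
  apply Nat.eqb_neq in Hi. rewrite Hi. apply zcoord_red.
Qed.

Lemma zcoord_deltaM_other t (b : Zprod) i : i <> t ->
  zcoord (gmul (zdelta t) b) i = zcoord b i.
Proof.
  intro Hi. rewrite Zprod_mul. unfold zdelta. rewrite zcoord_mk, zredDl.
  apply Nat.eqb_neq in Hi. rewrite Hi. apply zcoord_red.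
Qed.

Lemma zcoord_deltaM_self t (b : Zprod) : 1 <= t <= k ->
  zcoord (gmul (zdelta t) b) t = (1 + zcoord b t) mod m t.
Proof.
  intro Ht. rewrite Zprod_mul. unfold zdelta.
  now rewrite zcoord_mk, zredDl, Nat.eqb_refl, zred_in.
Qed.

Lemma zdelta_pow_split t (b : Zprod) :
  b = gmul (gpow (zdelta t) (zcoord b t)) (zmk k m (fun i => if i =? t then 0 else zcoord b i)).
Proof.
  apply zvec_ext; intro i.
  rewrite Zprod_mul, zcoord_delta_pow, zcoord_mk, zredDl, zredDr.
  destruct (i =? t) eqn:E.
  - apply Nat.eqb_eq in E as ->. now rewrite Nat.add_0_r, zcoord_red.
  - now rewrite Nat.add_0_l, zcoord_red.
Qed.

Lemma zcoord_prod_delta u j i :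
  zcoord (prod_down zdelta u 0 j) i = zred k m i (if i <=? j then u i else 0).
Proof.
  induction j as [|j IH].
  - cbn [prod_down]. rewrite Zprod_one.
    destruct i; [now rewrite zred_out by lia | now rewrite zred0].
  - rewrite prod_down_S, Zprod_mul, zcoord_delta_pow, IH, zredDl, zredDr by lia.
    f_equal. destruct (Nat.eq_dec i (S j)) as [->|Ne].
    + rewrite Nat.eqb_refl, Nat.leb_refl, (proj2 (Nat.leb_gt (S j) j)) by lia. lia.
    + rewrite (proj2 (Nat.eqb_neq i (S j)) Ne).
      destruct (Nat.leb_spec i j), (Nat.leb_spec i (S j)); lia.
Qed.

End ZProd.

Lemma zred_S k m j x : j <> S k -> zred (S k) m j x = zred k m j x.
Proof.
  intro Hj. destruct (in_range k j) eqn:E.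
  - apply in_range_true in E. rewrite !zred_in by lia. reflexivity.
  - apply in_range_false in E. rewrite !zred_out by lia. reflexivity.
Qed.

Lemma prod_m_pos k m : (forall i, 1 <= i <= k -> 0 < m i) -> 0 < prod_m m k.
Proof.
  induction k as [|k IH]; intro Hm; cbn [prod_m]; [lia|].
  apply Nat.mul_pos_pos; [apply Hm; lia | apply IH; intros; apply Hm; lia].
Qed.

Fixpoint zdecode (m : nat -> nat) (k i : nat) : nat -> nat :=
  match k with
  | O => fun _ => 0
  | S k' => fun j => if j =? S k' then (i / prod_m m k') mod m (S k')
                     else zdecode m k' (i mod prod_m m k') j
  end.

Lemma zdecode_normalized k m i : normalized k m (zdecode m k i).
Proof.
  revert i; induction k as [|k IH]; intros i j; cbn [zdecode]; [apply zred0|].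
  destruct (Nat.eq_dec j (S k)) as [->|Ne].
  - rewrite Nat.eqb_refl, zred_in by lia. apply Nat.Div0.mod_mod.
  - rewrite (proj2 (Nat.eqb_neq j (S k)) Ne), zred_S by exact Ne. apply IH.
Qed.

Section ZDecode.
Variables (m : nat -> nat).

Lemma zdecode_onto k : (forall i, 1 <= i <= k -> 0 < m i) ->
  forall f, normalized k m f -> exists i, i < prod_m m k /\ zdecode m k i = f.
Proof.
  induction k as [|k IH]; intros m_pos f Hf.
  - exists 0. split; [cbn; lia|].
    apply functional_extensionality; intro i. now rewrite <- Hf, zred_out by lia.
  - set (P := prod_m m k).
    assert (HP : 0 < P) by (apply prod_m_pos; intros; apply m_pos; lia).
    assert (Hfk : f (S k) < m (S k)).
    { rewrite <- Hf, zred_in by lia. apply Nat.mod_upper_bound. specialize (m_pos (S k)). lia. }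
    destruct (IH ltac:(intros; apply m_pos; lia) (fun j => if j =? S k then 0 else f j))
      as [i [Hi Ei]].
    { intro j. destruct (Nat.eq_dec j (S k)) as [->|Ne]; [now rewrite Nat.eqb_refl, zred0|].
      rewrite (proj2 (Nat.eqb_neq j (S k)) Ne), <- zred_S by exact Ne. apply Hf. }
    exists (i + f (S k) * P). split; [cbn; fold P; nia|].
    apply functional_extensionality; intro j. cbn [zdecode]. fold P.
    rewrite Nat.div_add, Nat.div_small, Nat.Div0.mod_add, !Nat.mod_small, Ei by lia.
    destruct (j =? S k) eqn:E; [apply Nat.eqb_eq in E as ->|]; reflexivity.
Qed.

Lemma zdecode_inj k : (forall i, 1 <= i <= k -> 0 < m i) ->
  forall i j, i < prod_m m k -> j < prod_m m k -> zdecode m k i = zdecode m k j -> i = j.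
Proof.
  induction k as [|k IH]; intros m_pos i j Hi Hj E; [cbn in *; lia|].
  set (P := prod_m m k) in *. cbn [prod_m] in Hi, Hj. fold P in Hi, Hj.
  assert (HP : 0 < P) by (apply prod_m_pos; intros; apply m_pos; lia).
  assert (Ehi : i / P = j / P).
  { apply (f_equal (fun g => g (S k))) in E. cbn [zdecode] in E. fold P in E.
    rewrite Nat.eqb_refl, !Nat.mod_small in E by (apply Nat.Div0.div_lt_upper_bound; lia).
    exact E. }
  assert (Elo : i mod P = j mod P).
  { apply IH; try (intros; apply m_pos; lia); try (apply Nat.mod_upper_bound; lia).
    apply functional_extensionality; intro x.
    destruct (Nat.eq_dec x (S k)) as [->|Ne].
    - rewrite <- (zdecode_normalized k m (i mod P)), <- (zdecode_normalized k m (j mod P)).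
      now rewrite !zred_out by lia.
    - apply (f_equal (fun g => g x)) in E. cbn [zdecode] in E. fold P in E.
      now rewrite (proj2 (Nat.eqb_neq x (S k)) Ne) in E. }
  now rewrite (Nat.div_mod_eq i P), (Nat.div_mod_eq j P), Ehi, Elo.
Qed.

End ZDecode.

Lemma Zprod_enum k m (m_pos : forall i, 1 <= i <= k -> 0 < m i) :
  exists r : nat -> Zprod k m m_pos,
    (forall a, exists i, i < prod_m m k /\ r i = a) /\
    (forall i j, i < prod_m m k -> j < prod_m m k -> r i = r j -> i = j).
Proof.
  exists (fun i => exist _ (zdecode m k i) (zdecode_normalized k m i)). split.
  - intro a. destruct (zdecode_onto m k m_pos (zcoord a)) as [i [Hi Ei]];
      [intro j; apply zcoord_red|].
    exists i. split; [exact Hi|]. apply zvec_ext; intro j. now rewrite <- Ei.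
  - intros i j Hi Hj E. apply (zdecode_inj m k m_pos); auto.
    now apply (f_equal (fun a : Zprod k m m_pos => zcoord a)) in E.
Qed.

Lemma has_index_transversal (G A : Grp) (F : G -> Prop) (phi : G -> A) (rep : A -> G)
    (N : nat) (enum : nat -> A) :
  is_hom phi -> (forall x, F x -> phi x = gone) -> (forall a, phi (rep a) = a) ->
  (forall x, F (gmul (ginv (rep (phi x))) x)) ->
  (forall a, exists i, i < N /\ enum i = a) ->
  (forall i j, i < N -> j < N -> enum i = enum j -> i = j) ->
  has_index F N.
Proof.
  intros phi_hom F_ker phi_rep rep_coset enum_onto enum_inj.
  exists (fun i => rep (enum i)). split.
  - intro x. destruct (enum_onto (phi x)) as [i [Hi Ei]].
    exists i. split; [exact Hi|]. rewrite Ei. apply rep_coset.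
  - intros i j Hi Hj Fij. apply enum_inj; auto.
    apply F_ker in Fij. rewrite phi_hom, (homV _ _ _ phi_hom), !phi_rep in Fij.
    rewrite <- (ginvK A (enum i)). symmetry. now apply gmul_eq1_inv.
Qed.

Section Wreath.
Variables A H : Grp.

(* The wreath product [H wr A = A ⋉ (A -> H)], with [A] acting on [A -> H] by
   translation of the argument. *)
Definition Wr : Grp.
Proof.
  refine {| carrier := A * (A -> H);
            gmul x y := (gmul (fst x) (fst y), fun z => gmul (snd x (gmul (fst y) z)) (snd y z));
            gone := (gone, fun _ => gone);
            ginv x := (ginv (fst x), fun z => ginv (snd x (gmul (ginv (fst x)) z))) |}.
  - intros [a c] [b d] [g f]. simpl. f_equal; [apply gmulA|].
    apply functional_extensionality; intro z. now rewrite !gmulA.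
  - intros [a c]. simpl. rewrite gmul1g. f_equal.
    apply functional_extensionality; intro z. apply gmul1g.
  - intros [a c]. simpl. rewrite gmulVg. f_equal.
    apply functional_extensionality; intro z. rewrite gmulKg. apply gmulVg.
Defined.

Lemma Wr_snd_mul (x y : Wr) z : snd (gmul x y) z = gmul (snd x (gmul (fst y) z)) (snd y z).
Proof. reflexivity. Qed.

Lemma Wr_snd_inv (x : Wr) z : snd (ginv x) z = ginv (snd x (gmul (ginv (fst x)) z)).
Proof. reflexivity. Qed.

Lemma Wr_snd_mul_ker (x y : Wr) :
  fst y = gone -> snd (gmul x y) gone = gmul (snd x gone) (snd y gone).
Proof. intro Hy. now rewrite Wr_snd_mul, Hy, gmul1g. Qed.

Definition coboundary (Psi : A -> H) (a : A) : A -> H :=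
  fun z => gmul (Psi (gmul a z)) (ginv (Psi z)).

Lemma Wr_pow_coboundary (Psi : A -> H) (a : A) n :
  gpow (G := Wr) (a, coboundary Psi a) n = (gpow a n, coboundary Psi (gpow a n)).
Proof.
  induction n as [|n IH]; cbn [gpow].
  - simpl. f_equal. apply functional_extensionality; intro z. unfold coboundary.
    now rewrite gmul1g, gmulgV.
  - rewrite IH. cbn. f_equal.
    apply functional_extensionality; intro z. unfold coboundary.
    now rewrite <- gmulA, gmulKg, gmulA.
Qed.

End Wreath.

(* [x |-> snd (Phi x) 1] is multiplicative on [ker phi], which contains [gen B]. *)
Lemma free_basis_of_wreath_lifts (G A : Grp) (B : G -> Prop) (phi : G -> A) :
  (forall x, gen B x -> phi x = gone) ->
  (forall (H : Grp) (f : G -> H), exists Phi : G -> Wr A H,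
     is_hom Phi /\ (forall x, fst (Phi x) = phi x) /\
     (forall b, B b -> snd (Phi b) gone = f b)) ->
  free_basis B.
Proof.
  intros B_ker lifts H f. split; [|intros psi1 psi2; apply hom_on_gen_eq].
  destruct (lifts H f) as [Phi [Phi_hom [Phi_fst Phi_B]]].
  exists (fun x => snd (Phi x) gone). split; [|exact Phi_B].
  intros x y _ Hy. rewrite Phi_hom. apply Wr_snd_mul_ker. rewrite Phi_fst. auto.
Qed.

Section Schreier.
Variables (n k : nat) (m : nat -> nat) (G : Grp) (e h : nat -> G).
Hypothesis m_pos : forall i, 1 <= i <= k -> 0 < m i.
Hypothesis G_pres : is_presented G k n m e h.

Local Notation A := (Zprod k m m_pos).
Local Notation delta := (zdelta k m m_pos).

Variable phi : G -> A.
Hypotheses (phi_hom : is_hom phi)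
  (phi_e : forall j, 1 <= j <= k -> phi (e j) = delta j)
  (phi_h : forall l, 1 <= l <= 2 * n -> phi (h l) = gone).

Lemma e_order j : 1 <= j <= k -> gpow (e j) (m j) = gone.
Proof. apply G_pres. Qed.

Definition basis (x : G) : Prop := S1 k m e x \/ S2 k n m e h x.

(* Exponents lie in [1, m_i] rather than [0, m_i - 1], matching the index sets
   of S_1 and S_2. *)
Definition rep_exp (a : A) (i : nat) : nat := m i - zcoord a i.

Definition rep (a : A) : G := ginv (prod_down e (rep_exp a) 0 k).

Definition schreier (x : G) (a : A) : G :=
  gmul (ginv (rep (gmul (phi x) a))) (gmul x (rep a)).

Definition xgen (t : nat) (b : A) : G :=
  gconj (g_xi e k t (rep_exp b)) (f_lam e t (rep_exp b)).

Definition xgen_proper (t : nat) (b : A) : Prop :=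
  zcoord b t <> 0 /\ exists i, 1 <= i <= t - 1 /\ zcoord b i <> 0.

Lemma rep_exp_range (a : A) i : 1 <= i <= k -> 1 <= rep_exp a i <= m i.
Proof.
  intro Hi. unfold rep_exp.
  assert (zcoord a i < m i) by (apply (zcoord_lt k m); auto). lia.
Qed.

Lemma rep_exp_mk u : (forall i, 1 <= i <= k -> 1 <= u i <= m i) ->
  forall i, 1 <= i <= k -> rep_exp (zmk k m (fun i => m i - u i)) i = u i.
Proof.
  intros Hu i Hi. unfold rep_exp. rewrite zcoord_mk, zred_in by exact Hi.
  specialize (Hu i Hi). rewrite Nat.mod_small; lia.
Qed.

Lemma rep_exp_deltaM_other t (b : A) i : i <> t -> rep_exp (gmul (delta t) b) i = rep_exp b i.
Proof. intro Hi. unfold rep_exp. now rewrite zcoord_deltaM_other. Qed.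

Lemma pow_rep_exp_deltaM t (b : A) : 1 <= t <= k ->
  gpow (e t) (rep_exp b t) = gmul (gpow (e t) (rep_exp (gmul (delta t) b) t)) (e t).
Proof.
  intro Ht. unfold rep_exp. rewrite zcoord_deltaM_self by exact Ht.
  assert (zcoord b t < m t) by (apply (zcoord_lt k m); auto).
  destruct (Nat.eq_dec (1 + zcoord b t) (m t)) as [Eq|Ne].
  - rewrite Eq, Nat.Div0.mod_same, Nat.sub_0_r, e_order by exact Ht.
    replace (m t - zcoord b t) with 1 by lia. cbn [gpow]. now rewrite gmulg1, gmul1g.
  - rewrite Nat.mod_small by lia. rewrite <- gpowSr. f_equal. lia.
Qed.

Lemma phi_rep (a : A) : phi (rep a) = a.
Proof.
  unfold rep. rewrite (homV _ _ _ phi_hom), (hom_prod_down _ _ _ _ _ _ _ phi_hom).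
  rewrite (eq_prod_down_gen _ _ delta) by (intros; apply phi_e; lia).
  apply zvec_ext; intro i. rewrite Zprod_inv, zcoord_prod_delta.
  destruct (in_range k i) eqn:Ei.
  - apply in_range_true in Ei. rewrite (proj2 (Nat.leb_le i k)), !zred_in by lia.
    assert (zcoord a i < m i) by (apply (zcoord_lt k m); auto).
    unfold rep_exp. destruct (zcoord a i) as [|c] eqn:Ea.
    + now rewrite Nat.sub_0_r, Nat.Div0.mod_same, Nat.sub_0_r, Nat.Div0.mod_same.
    + rewrite (Nat.mod_small (m i - S c)), Nat.mod_small; lia.
  - apply in_range_false in Ei. now rewrite !zred_out, zcoord_out.
Qed.

Lemma rep1 : rep gone = gone.
Proof.
  unfold rep. rewrite prod_down_eq1; [apply ginv1|].
  intros i Hi. unfold rep_exp. rewrite Zprod_one, Nat.sub_0_r. apply e_order. lia.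
Qed.

Lemma phi_gen_basis x : gen basis x -> phi x = gone.
Proof.
  intro Hx. induction Hx as [x [HS|HS]| |x y _ IHx _ IHy|x _ IHx].
  - destruct HS as (t & u & _ & _ & _ & _ & _ & ->). unfold f_lam.
    rewrite (hom_gconj _ _ _ phi_hom), (hom_gcomm _ _ _ phi_hom).
    rewrite gcomm_abelian by apply Zprod_comm. apply gconjg1.
  - destruct HS as (l & i & Hl & _ & ->).
    rewrite (hom_gconj _ _ _ phi_hom), phi_h by exact Hl. apply gconjg1.
  - apply (hom1 _ _ _ phi_hom).
  - now rewrite phi_hom, IHx, IHy, gmul1g.
  - now rewrite (homV _ _ _ phi_hom), IHx, ginv1.
Qed.

Lemma xgen_improper t (b : A) : 1 <= t <= k -> ~ xgen_proper t b -> xgen t b = gone.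
Proof.
  intros Ht Hb. unfold xgen, f_lam.
  destruct (Nat.eq_dec (zcoord b t) 0) as [Hbt|Hbt].
  - replace (gpow (e t) (rep_exp b t)) with (@gone G); [now rewrite gcomm1g, gconjg1|].
    unfold rep_exp. now rewrite Hbt, Nat.sub_0_r, e_order.
  - rewrite prod_down_eq1; [now rewrite gcommg1, gconjg1|].
    intros i Hi. destruct (Nat.eq_dec (zcoord b i) 0) as [Hbi|Hbi].
    + unfold rep_exp. rewrite Hbi, Nat.sub_0_r. apply e_order. lia.
    + exfalso. apply Hb. split; [exact Hbt|]. exists i. split; [lia | exact Hbi].
Qed.

Lemma S1_xgen x :
  S1 k m e x <-> exists t b, 1 <= t <= k /\ xgen_proper t b /\ x = xgen t b.
Proof.
  split.
  - intros (t & u & Ht & Hlo & [i [Hi Hui]] & Hut & Hhi & ->).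
    assert (Hu : forall i, 1 <= i <= k -> 1 <= u i <= m i).
    { intros j Hj. destruct (lt_eq_lt_dec j t) as [[?| ->]|?]; [apply Hlo | | apply Hhi]; lia. }
    pose proof (rep_exp_mk u Hu) as Eu.
    exists t, (zmk k m (fun i => m i - u i)). split; [lia|split].
    + split; [|exists i; split; [exact Hi|]]; rewrite zcoord_mk, zred_in by lia.
      * rewrite Nat.mod_small; lia.
      * specialize (Hlo i Hi). rewrite Nat.mod_small; lia.
    + unfold xgen, g_xi, f_lam.
      rewrite (eq_prod_down _ _ (rep_exp _) u t k), (eq_prod_down _ _ (rep_exp _) u 0 (t - 1)),
        Eu
        by (lia || (intros; apply Eu; lia)).
      reflexivity.
  - intros (t & b & Ht & [Hbt [i [Hi Hbi]]] & ->).
    assert (zcoord b t < m t) by (apply (zcoord_lt k m); auto).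
    assert (zcoord b i < m i) by (apply (zcoord_lt k m); [|apply m_pos]; lia).
    exists t, (rep_exp b). unfold rep_exp.
    repeat split; try lia; try (intros; apply rep_exp_range; lia).
    exists i. split; [exact Hi | lia].
Qed.

Lemma schreier_h l (b : A) : 1 <= l <= 2 * n ->
  schreier (h l) b = gconj (prod_down e (rep_exp b) 0 k) (h l).
Proof. intro Hl. unfold schreier, rep. now rewrite phi_h, gmul1g, ginvK. Qed.

Lemma S2_schreier x :
  S2 k n m e h x <-> exists l b, 1 <= l <= 2 * n /\ x = schreier (h l) b.
Proof.
  split.
  - intros (l & u & Hl & Hu & ->). exists l, (zmk k m (fun i => m i - u i)).
    split; [exact Hl|]. rewrite schreier_h by exact Hl. f_equal.
    apply eq_prod_down. intros i Hi. symmetry. apply rep_exp_mk; auto; lia.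
  - intros (l & b & Hl & ->). exists l, (rep_exp b).
    rewrite schreier_h by exact Hl.
    split; [exact Hl | split; [intros j Hj; now apply rep_exp_range | reflexivity]].
Qed.

Lemma xgen_gen_basis t (b : A) : 1 <= t <= k -> gen basis (xgen t b).
Proof.
  intro Ht. destruct (excluded_middle_informative (xgen_proper t b)) as [Hb|Hb].
  - apply gen_in. left. apply S1_xgen. eauto.
  - rewrite xgen_improper by assumption. apply gen_one.
Qed.

Lemma schreier1 (a : A) : schreier gone a = gone.
Proof. unfold schreier. now rewrite (hom1 _ _ _ phi_hom), !gmul1g, gmulVg. Qed.

Lemma schreierM x y (a : A) :
  schreier (gmul x y) a = gmul (schreier x (gmul (phi y) a)) (schreier y a).
Proof. unfold schreier. rewrite phi_hom, <- (gmulA A). now gsimpl. Qed.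

Lemma schreierV x (a : A) : schreier (ginv x) a = ginv (schreier x (gmul (phi (ginv x)) a)).
Proof. unfold schreier. rewrite (homV _ _ _ phi_hom), (gmulKVg A). now gsimpl. Qed.

Lemma schreier_e t (b : A) : 1 <= t <= k ->
  schreier (e t) b = gmul (xgen t (gmul (delta t) b)) (ginv (xgen t b)).
Proof.
  intro Ht. unfold schreier, xgen, rep, g_xi, f_lam. rewrite phi_e by exact Ht.
  destruct t as [|t]; [lia|]. replace (S t - 1) with t by lia.
  rewrite !(prod_down_split _ e _ 0 (S t) k), !(prod_down_S _ e _ 0 t) by lia.
  rewrite (eq_prod_down _ _ (rep_exp (gmul (delta (S t)) b)) (rep_exp b) (S t) k),
          (eq_prod_down _ _ (rep_exp (gmul (delta (S t)) b)) (rep_exp b) 0 t)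
    by (intros; apply rep_exp_deltaM_other; lia).
  rewrite (pow_rep_exp_deltaM (S t) b Ht). unfold gconj, gcomm. now gsimpl.
Qed.

Lemma schreier_gen_basis x (a : A) : gen basis (schreier x a).
Proof.
  revert a. apply (presented_ind G k n m e h G_pres (fun x => forall a, gen basis (schreier x a))).
  - intro a. rewrite schreier1. apply gen_one.
  - intros x1 y1 H1 H2 a. rewrite schreierM. now apply gen_mul.
  - intros x1 H1 a. rewrite schreierV. now apply gen_inv.
  - intros j Hj a. rewrite schreier_e by exact Hj.
    apply gen_mul; [|apply gen_inv]; now apply xgen_gen_basis.
  - intros l Hl a. apply gen_in. right. apply S2_schreier. eauto.
Qed.

Lemma rep_coset x : gen basis (gmul (ginv (rep (phi x))) x).
Proof.
  pose proof (schreier_gen_basis x gone) as Hx.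
  unfold schreier in Hx. now rewrite rep1, (gmulg1 A), gmulg1 in Hx.
Qed.

Lemma gen_basis_index : has_index (gen basis) (prod_m m k).
Proof.
  destruct (Zprod_enum k m m_pos) as [r [r_onto r_inj]].
  exact (has_index_transversal G A _ phi rep _ r phi_hom phi_gen_basis phi_rep rep_coset
           r_onto r_inj).
Qed.

Section Lift.
Variables (H : Grp) (f : G -> H).

(* Only the proper [xgen t b] belong to S_1; the others are trivial and must
   be sent to 1. *)
Definition xgen_image (t : nat) (b : A) : H :=
  if excluded_middle_informative (xgen_proper t b) then f (xgen t b) else gone.

Definition lift_e (t : nat) : Wr A H := (delta t, coboundary A H (xgen_image t) (delta t)).

Definition lift_h (l : nat) : Wr A H := (gone, fun b => f (schreier (h l) b)).

Lemma lift_e_order j : 1 <= j <= k -> gpow (lift_e j) (m j) = gone.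
Proof.
  intro Hj. unfold lift_e. rewrite Wr_pow_coboundary, zdelta_order by exact Hj.
  simpl. f_equal. apply functional_extensionality; intro z.
  unfold coboundary. now rewrite (gmul1g A), gmulgV.
Qed.

Variable Phi : G -> Wr A H.
Hypotheses (Phi_hom : is_hom Phi)
  (Phi_e : forall j, 1 <= j <= k -> Phi (e j) = lift_e j)
  (Phi_h : forall l, 1 <= l <= 2 * n -> Phi (h l) = lift_h l).

Lemma Phi_fst x : fst (Phi x) = phi x.
Proof.
  apply (proj2 (proj2 G_pres) A (fun x => fst (Phi x)) phi); auto.
  - intros x1 y1. now rewrite Phi_hom.
  - intros j Hj. now rewrite Phi_e, phi_e.
  - intros l Hl. now rewrite Phi_h, phi_h.
Qed.

Lemma Phi_snd_mul_ker x y : phi y = gone ->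
  snd (Phi (gmul x y)) gone = gmul (snd (Phi x) gone) (snd (Phi y) gone).
Proof. intro Hy. rewrite Phi_hom. apply Wr_snd_mul_ker. now rewrite Phi_fst. Qed.

Lemma Phi_snd_inv_ker x : phi x = gone -> snd (Phi (ginv x)) gone = ginv (snd (Phi x) gone).
Proof.
  intro Hx. rewrite (homV _ _ _ Phi_hom), Wr_snd_inv, Phi_fst, Hx, ginv1. now rewrite gmul1g.
Qed.

Lemma xgen_image_low t (b : A) :
  (forall i, 1 <= i <= t - 1 -> zcoord b i = 0) -> xgen_image t b = gone.
Proof.
  intro Hb. unfold xgen_image.
  destruct excluded_middle_informative as [[_ [i [Hi Hbi]]]|]; [|reflexivity].
  exfalso. now apply Hbi, Hb.
Qed.

(* Each letter e_i^(u_i) of the word is evaluated at a point whose coordinates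
   below i vanish, where [xgen_image i] is trivial. *)
Lemma Phi_snd_prod_down u j : j <= k -> forall z : A,
  (forall i, 1 <= i <= j -> zcoord (gmul (phi (prod_down e u 0 j)) z) i = 0) ->
  snd (Phi (prod_down e u 0 j)) z = gone.
Proof.
  induction j as [|j IH]; intros Hj z Hz; [cbn; now rewrite (hom1 _ _ _ Phi_hom)|].
  assert (Hz' : forall i, 1 <= i <= j -> zcoord (gmul (phi (prod_down e u 0 j)) z) i = 0).
  { intros i Hi. rewrite <- (zcoord_delta_powM_other k m m_pos (S j) (u (S j))) by lia.
    rewrite <- phi_e, <- (homX _ _ _ phi_hom), (gmulA A), <- phi_hom, <- prod_down_S by lia.
    apply Hz. lia. }
  rewrite prod_down_S, Phi_hom, Wr_snd_mul, IH, gmulg1, Phi_fst by (lia || exact Hz').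
  rewrite (homX _ _ _ Phi_hom), Phi_e by lia. unfold lift_e. rewrite Wr_pow_coboundary. cbn [snd].
  unfold coboundary. rewrite !xgen_image_low; [apply gmulgV| |];
    intros i Hi; rewrite ?zcoord_delta_powM_other by lia; apply Hz'; lia.
Qed.

Lemma Phi_snd_rep (b : A) : snd (Phi (rep b)) gone = gone.
Proof.
  unfold rep. rewrite (homV _ _ _ Phi_hom), Wr_snd_inv, Phi_snd_prod_down; [apply ginv1|lia|].
  intros i Hi. rewrite Phi_fst, (gmulKVg A). apply Zprod_one.
Qed.

Lemma Phi_snd_schreier x (a : A) : snd (Phi (schreier x a)) gone = snd (Phi x) a.
Proof.
  unfold schreier. rewrite Phi_hom, Wr_snd_mul, Phi_fst, phi_hom, phi_rep, (gmulg1 A).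
  rewrite (homV _ _ _ Phi_hom), Wr_snd_inv, Phi_fst, phi_rep, (gmulVg A), Phi_snd_rep, ginv1.
  rewrite Phi_hom, Wr_snd_mul, Phi_fst, phi_rep, (gmulg1 A), Phi_snd_rep.
  now rewrite gmul1g, gmulg1.
Qed.

Lemma Phi_snd_xgen t (b : A) : 1 <= t <= k -> snd (Phi (xgen t b)) gone = xgen_image t b.
Proof.
  intro Ht.
  assert (step : forall b0, snd (Phi (xgen t b0)) gone = xgen_image t b0 ->
            snd (Phi (xgen t (gmul (delta t) b0))) gone = xgen_image t (gmul (delta t) b0)).
  { intros b0 IH. pose proof (Phi_snd_schreier (e t) b0) as E.
    rewrite schreier_e, Phi_snd_mul_ker, Phi_snd_inv_ker, IH, Phi_e in E by
      (exact Ht || apply phi_gen_basis; try apply gen_inv; now apply xgen_gen_basis).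
    exact (gmulIr _ _ _ _ E). }
  assert (base : forall b0, zcoord b0 t = 0 -> snd (Phi (xgen t b0)) gone = xgen_image t b0).
  { intros b0 Hb0. unfold xgen_image.
    destruct excluded_middle_informative as [[]|Hb]; [contradiction|].
    rewrite xgen_improper by assumption. now rewrite (hom1 _ _ _ Phi_hom). }
  rewrite (zdelta_pow_split k m m_pos t b). induction (zcoord b t) as [|s IHs].
  - cbn [gpow]. rewrite (gmul1g A). apply base. now rewrite zcoord_mk, Nat.eqb_refl, zred0.
  - cbn [gpow]. rewrite <- (gmulA A). now apply step.
Qed.

Lemma Phi_snd_basis x : basis x -> snd (Phi x) gone = f x.
Proof.
  intros [HS|HS].
  - apply S1_xgen in HS as (t & b & Ht & Hb & ->). rewrite Phi_snd_xgen by exact Ht.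
    unfold xgen_image. now destruct excluded_middle_informative.
  - apply S2_schreier in HS as (l & b & Hl & ->). now rewrite Phi_snd_schreier, Phi_h.
Qed.

End Lift.

Lemma basis_free : free_basis basis.
Proof.
  apply (free_basis_of_wreath_lifts G A basis phi phi_gen_basis). intros H f.
  destruct (proj1 (proj2 G_pres) (Wr A H) (lift_e H f) (lift_h H f) (lift_e_order H f))
    as [Phi [Phi_hom [Phi_e Phi_h]]].
  exists Phi. split; [exact Phi_hom|]. split.
  - apply (Phi_fst H f); assumption.
  - apply (Phi_snd_basis H f); assumption.
Qed.

End Schreier.

Theorem corollary3p16 (n k : nat) (m : nat -> nat) (G : Grp) (e h : nat -> G) :
  1 <= k ->
  (forall i, 1 <= i <= k -> 2 <= m i) ->
  is_presented G k n m e h ->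
  ~ is_cyclic G ->
  ~ iso_Z2_free_Z2 G ->
  let F := gen (fun x => S1 k m e x \/ S2 k n m e h x) in
  is_free_subgroup F /\ has_index F (prod_m m k).
Proof.
  intros _ m_ge2 G_pres _ _ F.
  assert (m_pos : forall i, 1 <= i <= k -> 0 < m i) by (intros i Hi; specialize (m_ge2 i Hi); lia).
  destruct (proj1 (proj2 G_pres) (Zprod k m m_pos) (zdelta k m m_pos) (fun _ => gone)
              (zdelta_order k m m_pos)) as [phi [phi_hom [phi_e phi_h]]].
  split.
  - exists (basis n k m G e h). split; [reflexivity|].
    exact (basis_free n k m G e h m_pos G_pres phi phi_hom phi_e phi_h).
  - exact (gen_basis_index n k m G e h m_pos G_pres phi phi_hom phi_e phi_h).
Qed.
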